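(* Every integer $n>1$ with $F_n=D_n$ is a prime power pseudoperfect number, i.e., \[ \sum_{p^k\mid n}\frac{1}{p^k}+\frac1n=1, \] where the sum ranges over all prime powers $p^k$ ($p$ prime, $k\ge1$) dividing $n$.
   Context: For a composite integer $n$, let $d(n)$ denote the largest divisor of $n$ with $1<d(n)<n$. Define $f$ on integers $n>1$ by $f(n)=n-1$ if $n$ is prime and $f(n)=n-d(n)$ if $n$ is composite. Let $f^{(0)}(n)=n$ and $f^{(i)}=f\circ f^{(i-1)}$. Define $F_n=\{n,f(n),f^{(2)}(n),\dots,1\}$, the set of iterates of $f$ starting at $n$ up to and including the first occurrence of $1$, and let $D_n$ be the set of positive divisors of $n$. A prime power pseudoperfect number is an integer $n>1$ satisfying $\sum_{p^k\mid n}1/p^k+1/n=1$, the sum over all prime powers $p^k$ ($p$ prime, $k\ge 1$) dividing $n$. *)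

From HB Require Import structures.
From mathcomp Require Import all_boot all_order all_algebra.
Set Implicit Arguments. Unset Strict Implicit. Unset Printing Implicit Defensive.

(* d(n): the largest divisor d of n with 1 < d < n (meaningful for composite n). *)
Definition dlarge (n : nat) : nat :=
  \max_(d <- divisors n | (1 < d) && (d < n)) d.

Definition f (n : nat) : nat := if prime n then n.-1 else n - dlarge n.

(* m belongs to F_n = {n, f(n), f^(2)(n), ..., 1}: m = f^(i)(n) for some i
   such that no earlier iterate f^(j)(n), j < i, equals 1. *)
Definition inF (n m : nat) : Prop :=
  exists i : nat, iter i f n = m /\ (forall j, j < i -> iter j f n <> 1).

Definition prime_power (q : nat) : bool :=
  [exists p : 'I_q.+1, [exists k : 'I_q.+1,
     [&& prime p, 0 < (k : nat) & q == (p : nat) ^ (k : nat)]]].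

(* Since the iterates of f decrease, F_n = D_n means that f steps down
   through the divisors of n one at a time: for every divisor a > 1, f a is
   the largest divisor of n below a.  Write n = P p^e with p the largest prime
   factor of n.  Then f p = p - 1 divides P.  If P had a divisor above p - 1,
   the least one, a, would satisfy a > p, and f a = (a / r)(r - 1) with
   r = pdiv a <= p is prime to p, hence a divisor of P with p <= f a < a.
   So P = p - 1, and P inherits the property.  By induction the prime powers
   of P contribute 1 - 1/(p-1), and 1/p + ... + 1/p^e + 1/((p-1) p^e) = 1/(p-1). *)

From HB Require Import structures.
From mathcomp Require Import all_boot all_order all_algebra.
From mathcomp Require Import ring.
Import GRing.Theory Num.Theory.

Set Implicit Arguments.
Unset Strict Implicit.
Unset Printing Implicit Defensive.

Lemma dlarge_pdiv a : 1 < a -> ~~ prime a -> dlarge a = a %/ pdiv a.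
Proof.
move=> a_gt1 a_nprime; have a_gt0 : 0 < a by apply: ltnW.
have pdiv_gt1 : 1 < pdiv a by rewrite prime_gt1 ?pdiv_prime.
have pdiv_a : pdiv a %| a := pdiv_dvd a.
apply/eqP; rewrite eqn_leq; apply/andP; split.
  apply/bigmax_leqP_seq => d; rewrite -dvdn_divisors // => d_a /andP[d_gt1 d_lt].
  have cod_gt1 : 1 < a %/ d by rewrite ltn_divRL // mul1n.
  rewrite leq_divRL ?(ltnW pdiv_gt1) // -{2}(divnK d_a) [_ %/ d * _]mulnC leq_mul2l.
  by rewrite (pdiv_min_dvd cod_gt1 (dvdn_div d_a)) orbT.
apply: (leq_bigmax_seq (F := id)); first by rewrite -dvdn_divisors ?dvdn_div.
rewrite ltn_divRL // mul1n ltn_Pdiv // andbT ltn_neqAle pdiv_leq // andbT.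
by apply: contraNneq a_nprime => <-; rewrite pdiv_prime.
Qed.

Lemma f_pdivE a : 1 < a -> f a = a %/ pdiv a * (pdiv a).-1.
Proof.
move=> a_gt1; have -> : a %/ pdiv a * (pdiv a).-1 = a - a %/ pdiv a.
  by rewrite -subn1 mulnBr muln1 divnK ?pdiv_dvd.
rewrite /f; case: ifP => [a_prime | /negbT a_nprime]; last by rewrite dlarge_pdiv.
by rewrite pdiv_id // divnn prime_gt0 // subn1.
Qed.

Lemma f_lt a : 1 < a -> f a < a.
Proof.
move=> a_gt1; have a_gt0 := ltnW a_gt1.
have pdiv_gt0 : 0 < pdiv a by rewrite prime_gt0 ?pdiv_prime.
have cod_gt0 : 0 < a %/ pdiv a by rewrite divn_gt0 // pdiv_leq.
by rewrite f_pdivE // -[X in _ < X](divnK (pdiv_dvd a)) ltn_pmul2l // ltn_predL.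
Qed.

Lemma f_leq a : f a <= a.
Proof. rewrite /f; case: ifP => _; [exact: leq_pred | exact: leq_subr]. Qed.

Lemma iter_f_nonincr n i j : i <= j -> iter j f n <= iter i f n.
Proof.
move=> /subnK <-; elim: (j - i) => [|k IHk] //.
by rewrite addSn iterS (leq_trans (f_leq _)).
Qed.

Definition f_pred_divisor (n : nat) : Prop :=
  forall a, 1 < a -> a %| n ->
    f a %| n /\ (forall b, b %| n -> f a < b -> a <= b).

Lemma F_eq_D_f_pred_divisor n : 0 < n ->
  (forall m, inF n m <-> (0 < m /\ m %| n)) -> f_pred_divisor n.
Proof.
move=> n_gt0 FD a a_gt1 a_n.
have [i [iter_i pre_i]] : inF n a by apply/FD; split => //; apply: ltnW.
have F_fa : inF n (f a).
  exists i.+1; split; first by rewrite iterS iter_i.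
  move=> j; rewrite ltnS leq_eqVlt => /predU1P[-> | /pre_i //].
  by rewrite iter_i => a_eq1; rewrite a_eq1 in a_gt1.
split; first by case/FD: F_fa.
move=> b b_n fa_lt_b.
have [k [iter_k _]] : inF n b by apply/FD; rewrite (dvdn_gt0 n_gt0 b_n).
have [k_le_i | i_lt_k] := leqP k i; first by rewrite -iter_i -iter_k iter_f_nonincr.
have := @iter_f_nonincr n _ _ i_lt_k; rewrite iter_k iterS iter_i => b_le_fa.
by rewrite leqNgt fa_lt_b in b_le_fa.
Qed.

Lemma prime_powerP q :
  reflect (exists p k, [/\ prime p, 0 < k & q = p ^ k]) (prime_power q).
Proof.
apply: (iffP existsP) => [[p /existsP[k /and3P[p_prime k_gt0 /eqP ->]]] | ].
  by exists (val p), (val k).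
move=> [p [k [p_prime k_gt0 q_eq]]]; have p_gt1 := prime_gt1 p_prime.
have p_lt : p < q.+1.
  by rewrite ltnS q_eq -{1}(expn1 p); apply: leq_pexp2l (ltnW p_gt1) k_gt0.
have k_lt : k < q.+1 by rewrite q_eq ltnS (ltnW (ltn_expl _ p_gt1)).
exists (Ordinal p_lt); apply/existsP; exists (Ordinal k_lt).
by rewrite /= p_prime k_gt0 q_eq eqxx.
Qed.

Definition prime_power_recip_sum (n : nat) : rat :=
  (\sum_(q <- divisors n | prime_power q) (q%:R)^-1)%R.

Lemma prime_power_divisors_mul_pfactor P p e :
  prime p -> 0 < P -> ~~ (p %| P) ->
  perm_eq [seq q <- divisors (P * p ^ e) | prime_power q]
          ([seq q <- divisors P | prime_power q] ++ [seq p ^ j.+1 | j <- iota 0 e]).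
Proof.
move=> p_prime P_gt0 p_nP; have p_gt1 := prime_gt1 p_prime.
have n_gt0 : 0 < P * p ^ e by rewrite muln_gt0 P_gt0 expn_gt0 prime_gt0.
have p_coP : coprime p P by rewrite prime_coprime.
apply: uniq_perm.
- by rewrite filter_uniq ?divisors_uniq.
- rewrite cat_uniq filter_uniq ?divisors_uniq //= map_inj_uniq ?iota_uniq ?andbT;
    last by move=> i j /(expnI p_gt1) [].
  apply/hasPn => _ /mapP[j _ ->] /=; rewrite mem_filter -dvdn_divisors //.
  apply: contra p_nP => /andP[_]; apply: dvdn_trans.
  by rewrite expnS dvdn_mulr.
move=> q; rewrite mem_cat !mem_filter -!dvdn_divisors //.
apply/andP/orP => [[/prime_powerP[r [k [r_prime k_gt0 ->]]] rk_n] | ].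
  move: rk_n; have [-> rk_n | r_neq_p rk_n] := eqVneq r p.
    right; apply/mapP; exists k.-1; last by rewrite prednK.
    rewrite Gauss_dvdr ?coprimeXl // dvdn_Pexp2l // in rk_n.
    by rewrite mem_iota add0n prednK.
  left; apply/andP; split; first by apply/prime_powerP; exists r, k.
  have rk_co_pe : coprime (r ^ k) (p ^ e).
    by apply/coprimeXl/coprimeXr; rewrite prime_coprime // dvdn_prime2 // r_neq_p.
  by rewrite -(Gauss_dvdl _ rk_co_pe).
move=> [/andP[q_pp q_P] | /mapP[j]]; first by rewrite q_pp dvdn_mulr.
rewrite mem_iota add0n /= => j_lt_e ->; split.
  by apply/prime_powerP; exists p, j.+1.
by rewrite dvdn_mull // dvdn_exp2l.
Qed.

Lemma prime_power_recip_sum_mul_pfactor P p e :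
  prime p -> 0 < P -> ~~ (p %| P) ->
  prime_power_recip_sum (P * p ^ e) =
    (prime_power_recip_sum P + \sum_(j < e) ((p ^ j.+1)%:R)^-1)%R.
Proof.
move=> p_prime P_gt0 p_nP; rewrite /prime_power_recip_sum -big_filter.
rewrite (perm_big _ (@prime_power_divisors_mul_pfactor P p e p_prime P_gt0 p_nP)).
by rewrite big_cat big_filter big_map -{1}(subn0 e) -/(index_iota 0 e) big_mkord.
Qed.

Lemma sum_recip_powS_tail p e : 1 < p ->
  (\sum_(j < e) ((p ^ j.+1)%:R : rat)^-1 + ((p.-1 * p ^ e)%:R)^-1
     = ((p.-1)%:R)^-1)%R.
Proof.
move=> p_gt1; have p_gt0 := ltnW p_gt1.
have pred_p : ((p.-1)%:R = p%:R - 1 :> rat)%R by rewrite -subn1 natrB.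
have p_neq0 : (p%:R != 0 :> rat)%R by rewrite pnatr_eq0 -lt0n.
have p1_neq0 : (p%:R - 1 != 0 :> rat)%R.
  by rewrite -pred_p pnatr_eq0 -lt0n ltn_predRL.
elim: e => [|e IHe]; first by rewrite big_ord0 add0r muln1.
have pe_neq0 : (p%:R ^+ e != 0 :> rat)%R by rewrite expf_neq0.
rewrite big_ord_recr /= -IHe !natrM !natrX pred_p exprS.
by field; rewrite p1_neq0 p_neq0 pe_neq0.
Qed.

Section MaxPrimeFactor.

Context {P p e : nat}.
Hypotheses (p_prime : prime p) (p_nP : ~~ (p %| P))
           (P_primes_le : forall r, prime r -> r %| P -> r <= p).

Lemma f_dvd_cofactor a : 1 < a -> a %| P -> f a %| P * p ^ e -> f a %| P.
Proof.
move=> a_gt1 a_P; have r_prime := pdiv_prime a_gt1; have r_gt1 := prime_gt1 r_prime.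
have r_le_p := P_primes_le r_prime (dvdn_trans (pdiv_dvd a) a_P).
suff p_nfa : ~~ (p %| f a).
  by rewrite Gauss_dvdl // coprimeXr // coprime_sym prime_coprime.
rewrite f_pdivE // Euclid_dvdM // negb_or; apply/andP; split.
  apply: contra p_nP => p_cod.
  exact: dvdn_trans p_cod (dvdn_trans (dvdn_div (pdiv_dvd a)) a_P).
by rewrite gtnNdvd ?ltn_predRL // (leq_trans _ r_le_p) // ltn_predL prime_gt0.
Qed.

Lemma f_pred_divisor_cofactor : f_pred_divisor (P * p ^ e) -> f_pred_divisor P.
Proof.
move=> fpd a a_gt1 a_P; have [fa_n fa_pred] := fpd a a_gt1 (dvdn_mulr _ a_P).
split; first exact: f_dvd_cofactor.
by move=> b b_P; apply: fa_pred; apply: dvdn_mulr.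
Qed.

Lemma f_pred_divisor_cofactor_pred : 0 < P -> 0 < e ->
  f_pred_divisor (P * p ^ e) -> P = p.-1.
Proof.
move=> P_gt0 e_gt0 fpd; have p_gt1 := prime_gt1 p_prime; have p_gt0 := ltnW p_gt1.
have p_n : p %| P * p ^ e by rewrite dvdn_mull // dvdn_exp.
have pred_P : p.-1 %| P.
  have [fp_n _] := fpd p p_gt1 p_n.
  by move: fp_n; rewrite /f p_prime Gauss_dvdl // coprimeXr // coprimePn.
apply/eqP; rewrite eqn_leq (dvdn_leq P_gt0 pred_P) andbT leqNgt; apply/negP => pred_lt_P.
have big_divisor : exists a, (a %| P) && (p.-1 < a) by exists P; rewrite dvdnn.
case: (ex_minnP big_divisor) => a /andP[a_P pred_lt_a] a_min.
have p_lt_a : p < a.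
  rewrite ltn_neqAle -(prednK p_gt0) pred_lt_a andbT prednK //.
  by apply: contraNneq p_nP => ->.
have a_gt1 : 1 < a := ltn_trans p_gt1 p_lt_a.
have [fa_n fa_pred] := fpd a a_gt1 (dvdn_mulr _ a_P).
have p_le_fa : p <= f a.
  by rewrite leqNgt; apply/negP => /(fa_pred _ p_n); rewrite leqNgt p_lt_a.
have := a_min (f a); rewrite f_dvd_cofactor // prednK //.
by move=> /(_ p_le_fa); rewrite leqNgt f_lt.
Qed.

End MaxPrimeFactor.

Lemma f_pred_divisor_decomp n : 1 < n -> f_pred_divisor n ->
  exists p e, [/\ prime p, 0 < e, n = p.-1 * p ^ e & f_pred_divisor p.-1].
Proof.
move=> n_gt1 fpd; have n_gt0 := ltnW n_gt1.
set p := max_pdiv n; have p_prime : prime p := max_pdiv_prime n_gt1.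
set e := logn p n; have e_gt0 : 0 < e.
  by rewrite logn_gt0 mem_primes p_prime n_gt0 max_pdiv_dvd.
have [P p_coP n_eq] := pfactor_coprime p_prime n_gt0.
have p_nP : ~~ (p %| P) by rewrite -prime_coprime.
have P_gt0 : 0 < P by move: n_gt0; rewrite n_eq muln_gt0 => /andP[].
have P_primes_le r : prime r -> r %| P -> r <= p.
  move=> r_prime r_P; apply: max_pdiv_max.
  by rewrite mem_primes r_prime n_gt0 n_eq dvdn_mulr.
move: fpd; rewrite {1}n_eq -/e => fpd.
have P_eq := f_pred_divisor_cofactor_pred p_prime p_nP P_primes_le P_gt0 e_gt0 fpd.
exists p, e; rewrite -P_eq; split => //.
exact: f_pred_divisor_cofactor p_prime p_nP P_primes_le fpd.
Qed.

Lemma prime_power_recip_sum_f_pred_divisor n : 0 < n -> f_pred_divisor n ->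
  (prime_power_recip_sum n + (n%:R)^-1 = 1)%R.
Proof.
elim/ltn_ind: n => n IHn n_gt0 fpd.
have [n_gt1 | n_le1] := ltnP 1 n; last first.
  have -> : n = 1 by apply/eqP; rewrite eqn_leq n_le1.
  have not_pp1 : ~~ prime_power 1.
    apply/negP => /prime_powerP[p [k [p_prime k_gt0]]].
    by rewrite -(expn0 p) => /(expnI (prime_gt1 p_prime)) k_eq0; rewrite -k_eq0 in k_gt0.
  by rewrite /prime_power_recip_sum big_cons big_nil (negbTE not_pp1) add0r invr1.
have [p [e [p_prime e_gt0 n_eq fpd_pred]]] := f_pred_divisor_decomp n_gt1 fpd.
have p_gt1 := prime_gt1 p_prime.
have pred_gt0 : 0 < p.-1 by rewrite ltn_predRL.
have p_npred : ~~ (p %| p.-1) by rewrite gtnNdvd // ltn_predL prime_gt0.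
have pred_lt_n : p.-1 < n by rewrite n_eq ltn_Pmulr // -(expn0 p) ltn_exp2l.
rewrite n_eq prime_power_recip_sum_mul_pfactor //.
by rewrite -addrA sum_recip_powS_tail // IHn.
Qed.

Theorem theorem3 (n : nat) :
  1 < n ->
  (forall m : nat, inF n m <-> (0 < m /\ m %| n)) ->
  (\sum_(q <- divisors n | prime_power q) (q%:R : rat)^-1 + (n%:R : rat)^-1
     = 1)%R.
Proof.
move=> n_gt1 FD; have n_gt0 := ltnW n_gt1.
exact: prime_power_recip_sum_f_pred_divisor n_gt0 (F_eq_D_f_pred_divisor n_gt0 FD).
Qed.
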